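(* Let $\kappa > 1$ and let $x_1 = \dfrac{\sqrt{2}}{\sqrt{(\kappa-1)(\pi(\kappa-1)+2)}}$. Then for every $x \geq x_1$, \[ \kappa x\, R(x) \geq 1. \]
   Context: $Q$ denotes the Gaussian $Q$-function, $Q(x) = \frac{1}{\sqrt{2\pi}}\int_x^\infty e^{-t^2/2}\,dt$, and for $x \geq 0$, $R(x) = \sqrt{2\pi}\, Q(x)\, e^{x^2/2}$ (the Mills' ratio). *)

From Stdlib Require Import Reals Lra.
Open Scope R_scope.

Definition gauss (t : R) : R := exp (- (t * t) / 2).

Definition tail_integral (x I : R) : Prop :=
  exists pr : forall b : R, x <= b -> Riemann_integrable gauss x b,
    forall eps : R, eps > 0 ->
      exists M : R, forall b (hb : x <= b), b >= M ->
        Rabs (RiemannInt (pr b hb) - I) < eps.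

(* Q(x) = (1/sqrt(2 pi)) * int_x^infty exp(-t^2/2) dt, given the tail integral I. *)
Definition Qval (I : R) : R := I / sqrt (2 * PI).

Definition Mills (x I : R) : R := sqrt (2 * PI) * Qval I * exp (x * x / 2).

From Stdlib Require Import Reals Lra.
From Coquelicot Require Import Coquelicot.
Open Scope R_scope.

(* The threshold x1 is exactly the point beyond which Boyd's
   lower bound for the Mills ratio,
        R(x) >= PI / ((PI - 1) x + sqrt (x^2 + 2 PI)),
   already gives kappa x R(x) >= 1; so the work is to prove Boyd's bound.
   Write g(t) = exp(-t^2/2) and B(t) = PI g(t) / ((PI-1) t + sqrt (t^2+2PI)).
   One computes -B' - g = w * M with w > 0 and M decreasing, so -B' <= g on
   [a, +oo) once M(a) <= 0, and -B' >= g on [0, x] when M(x) >= 0.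
   - If M(x) <= 0: int_x^b g >= B(x) - B(b), and B(b) -> 0.
   - If M(x) >= 0: int_0^x g <= B(0) - B(x) with B(0) = sqrt(PI/2), and
     int_0^b g -> sqrt(PI/2) (the Gaussian integral, obtained here by the
     classical argument that (int_0^u g)^2 + 2 int_0^1 e^{-u^2(1+t^2)/2}/(1+t^2) dt
     is constant), so again int_x^b g >= B(x) - o(1).
   In both cases the tail integral I satisfies I >= B(x), i.e.
   R(x) = I e^{x^2/2} >= PI / ((PI-1)x + sqrt(x^2+2PI)).  The file develops:
   elementary facts on g, the Gaussian integral, Boyd's function and its
   derivative, lower bounds for tail integrals, and finally the theorem. *)

Lemma exp_monotone a b : a <= b -> exp a <= exp b.
Proof.
  intros [Hlt|Heq]; [left; apply exp_increasing; exact Hlt | subst; right; reflexivity].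
Qed.

Lemma gauss_pos t : 0 < gauss t.
Proof. apply exp_pos. Qed.

Lemma gauss_mul_exp t : gauss t * exp (t * t / 2) = 1.
Proof.
  unfold gauss. rewrite <- exp_plus.
  replace (- (t * t) / 2 + t * t / 2) with 0 by field. apply exp_0.
Qed.

Lemma gauss_continuous t : continuous gauss t.
Proof.
  apply (@ex_derive_continuous R_AbsRing R_NormedModule).
  unfold gauss. auto_derive. exact I.
Qed.

Lemma ex_RInt_continuous_everywhere (f : R -> R) a b :
  (forall z, continuous f z) -> ex_RInt f a b.
Proof. intros Hf. apply (@ex_RInt_continuous R_CompleteNormedModule). intros; apply Hf. Qed.

Lemma gauss_ex_RInt a b : ex_RInt gauss a b.
Proof. apply ex_RInt_continuous_everywhere, gauss_continuous. Qed.

(* The density tends to 0 at +oo, via exp(b^2/2) >= 1 + b^2/2 >= b. *)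
Lemma gauss_vanishes eps : 0 < eps -> exists M, forall b, b >= M -> gauss b <= eps.
Proof.
  intros He. exists (/ eps + 1). intros b Hb.
  pose proof (Rinv_0_lt_compat eps He) as Hinv.
  pose proof (gauss_mul_exp b) as E. pose proof (gauss_pos b).
  pose proof (exp_ineq1_le (b * b / 2)).
  assert (Hbe : b <= exp (b * b / 2)) by nra.
  assert (Hgb : gauss b * b <= 1) by nra.
  assert (Hbeps : b * eps >= 1).
  { replace 1 with ((/ eps + 1) * eps - eps) by (field; lra). nra. }
  nra.
Qed.

(* The Gaussian integral: (int_0^u g)^2 + 2 F(u) is constant, where
   F(u) = int_0^1 e^{-u^2(1+t^2)/2}/(1+t^2) dt; comparing u = 0 with u -> +oo
   gives int_0^oo g = sqrt(PI/2). *)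

Definition gauss_int (u : R) : R := RInt gauss 0 u.

Definition kernel (u t : R) : R := exp (- (u * u * (1 + t * t)) / 2) / (1 + t * t).

Definition feynman (u : R) : R := RInt (kernel u) 0 1.

Lemma one_plus_sq_pos t : 0 < 1 + t * t.
Proof. nra. Qed.

Lemma kernel_derive u t :
  is_derive (fun z => kernel z t) u (- u * exp (- (u * u * (1 + t * t)) / 2)).
Proof.
  pose proof (one_plus_sq_pos t). unfold kernel. auto_derive.
  - exact I.
  - unfold Rdiv. field. lra.
Qed.

Lemma Derive_kernel u t :
  Derive (fun z => kernel z t) u = - u * exp (- (u * u * (1 + t * t)) / 2).
Proof. apply is_derive_unique, kernel_derive. Qed.

Lemma kernel_continuous u t : continuous (kernel u) t.
Proof.
  pose proof (one_plus_sq_pos t).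
  apply (@ex_derive_continuous R_AbsRing R_NormedModule). unfold kernel. auto_derive. lra.
Qed.

Lemma kernel_derive_continuous u t :
  continuity_2d_pt (fun u v => Derive (fun z => kernel z v) u) u t.
Proof.
  apply continuity_2d_pt_ext with (f := fun u v => - (u * exp (- / 2 * (u * u * (1 + v * v))))).
  { intros u' v. symmetry. cbv beta.
    rewrite Derive_kernel.
    replace (- (u' * u' * (1 + v * v)) / 2) with (- / 2 * (u' * u' * (1 + v * v))) by field.
    ring. }
  apply continuity_2d_pt_opp, continuity_2d_pt_mult; [apply continuity_2d_pt_id1|].
  apply continuity_1d_2d_pt_comp; [apply derivable_continuous_pt, derivable_pt_exp|].
  apply continuity_2d_pt_mult; [apply continuity_2d_pt_const|].
  apply continuity_2d_pt_mult.
  - apply continuity_2d_pt_mult; apply continuity_2d_pt_id1.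
  - apply continuity_2d_pt_plus; [apply continuity_2d_pt_const|].
    apply continuity_2d_pt_mult; apply continuity_2d_pt_id2.
Qed.

Lemma gauss_scaled_ex_RInt u a b : ex_RInt (fun t => gauss (u * t)) a b.
Proof.
  apply ex_RInt_continuous_everywhere. intros z.
  apply (@ex_derive_continuous R_AbsRing R_NormedModule). unfold gauss. auto_derive. exact I.
Qed.

Lemma gauss_int_rescaled u : u * RInt (fun t => gauss (u * t)) 0 1 = gauss_int u.
Proof.
  unfold gauss_int.
  assert (H := RInt_comp_lin gauss u 0 0 1 (gauss_ex_RInt _ _)).
  replace (u * 0 + 0) with 0 in H by ring. replace (u * 1 + 0) with u in H by ring.
  rewrite <- H, RInt_scal.
  - unfold scal; simpl; unfold mult; simpl. f_equal.
    apply RInt_ext. intros t _. f_equal. ring.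
  - apply (ex_RInt_ext (fun t => gauss (u * t))); [|apply gauss_scaled_ex_RInt].
    intros t _. rewrite Rplus_0_r. reflexivity.
Qed.

(* Differentiating under the integral sign: the u-derivative of the kernel is
   -u g(u) g(u t), whose integral over [0,1] is -g(u) int_0^u g. *)
Lemma feynman_derive u : is_derive feynman u (- gauss u * gauss_int u).
Proof.
  assert (H : is_derive feynman u (RInt (fun t => Derive (fun z => kernel z t) u) 0 1)).
  { apply (is_derive_RInt_param kernel 0 1 u).
    - apply filter_forall. intros u' t _. eexists. apply kernel_derive.
    - intros t _. apply kernel_derive_continuous.
    - apply filter_forall. intros u'. apply ex_RInt_continuous_everywhere, kernel_continuous. }
  replace (- gauss u * gauss_int u) with (RInt (fun t => Derive (fun z => kernel z t) u) 0 1);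
    [exact H|].
  rewrite <- gauss_int_rescaled.
  pose proof (gauss_scaled_ex_RInt u 0 1) as Hint.
  transitivity (RInt (fun t => scal (- u * gauss u) (gauss (u * t))) 0 1).
  - apply RInt_ext. intros t _. rewrite Derive_kernel.
    unfold scal; simpl; unfold mult; simpl. unfold gauss.
    rewrite (Rmult_assoc (- u)), <- exp_plus. f_equal. f_equal. field.
  - rewrite (RInt_scal _ _ _ _ Hint). unfold scal; simpl; unfold mult; simpl. ring.
Qed.

Lemma gauss_int_derive u : is_derive gauss_int u (gauss u).
Proof.
  apply (@is_derive_RInt R_CompleteNormedModule gauss gauss_int 0 u).
  - apply filter_forall. intros b. apply (@RInt_correct R_CompleteNormedModule), gauss_ex_RInt.
  - apply gauss_continuous.
Qed.

Lemma derive_zero_const (f : R -> R) a b :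
  (forall z, is_derive f z 0) -> f b = f a.
Proof.
  intros Hf.
  assert (H : is_RInt (fun _ => 0) a b (minus (f b) (f a))).
  { apply (@is_RInt_derive R_CompleteNormedModule).
    - intros z _. apply Hf.
    - intros z _. apply continuous_const. }
  apply (@is_RInt_unique R_CompleteNormedModule) in H. rewrite RInt_const in H.
  change ((b - a) * 0 = f b - f a) in H. lra.
Qed.

(* F(0) = int_0^1 dt/(1+t^2) = atan 1. *)
Lemma feynman_at_0 : feynman 0 = PI / 4.
Proof.
  unfold feynman. rewrite <- atan_1.
  transitivity (RInt (fun t => / (1 + t ^ 2)) 0 1).
  { apply RInt_ext. intros t _. unfold kernel.
    replace (- (0 * 0 * (1 + t * t)) / 2) with 0 by field.
    rewrite exp_0. unfold Rdiv. rewrite Rmult_1_l. simpl. rewrite Rmult_1_r. reflexivity. }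
  replace (atan 1) with (atan 1 - atan 0) by (rewrite atan_0; ring).
  apply (@is_RInt_unique R_CompleteNormedModule), (@is_RInt_derive R_CompleteNormedModule atan).
  - intros t _. apply is_derive_Reals, derivable_pt_lim_atan.
  - intros t _. apply (@ex_derive_continuous R_AbsRing R_NormedModule). auto_derive. nra.
Qed.

(* The invariant: its derivative vanishes and its value at 0 is 2 F(0) = PI/2. *)
Lemma gauss_int_feynman u : gauss_int u ^ 2 + 2 * feynman u = PI / 2.
Proof.
  set (H := fun z => gauss_int z ^ 2 + 2 * feynman z).
  assert (Hder : forall z, is_derive H z 0).
  { intros z.
    assert (E : plus (INR 2 * gauss z * gauss_int z ^ Init.Nat.pred 2)
                     (2 * (- gauss z * gauss_int z)) = 0).
    { change (INR 2 * gauss z * gauss_int z ^ Init.Nat.pred 2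
              + 2 * (- gauss z * gauss_int z) = 0). simpl. ring. }
    rewrite <- E. apply (@is_derive_plus R_AbsRing R_NormedModule).
    - apply is_derive_pow, gauss_int_derive.
    - apply (is_derive_scal feynman z 2), feynman_derive. }
  change (H u = PI / 2). rewrite (derive_zero_const H 0 u Hder).
  unfold H, gauss_int. rewrite feynman_at_0, RInt_point. change (0 ^ 2 + 2 * (PI / 4) = PI / 2).
  field.
Qed.

(* F(u) <= g(u), since the integrand is at most g(u) on [0,1]. *)
Lemma feynman_le_gauss u : feynman u <= gauss u.
Proof.
  unfold feynman. replace (gauss u) with (RInt (fun _ => gauss u) 0 1).
  - apply RInt_le; [lra | apply ex_RInt_continuous_everywhere, kernel_continuous
                        | apply ex_RInt_const |].
    intros t _. unfold kernel, gauss. pose proof (one_plus_sq_pos t).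
    assert (Hexp : exp (- (u * u * (1 + t * t)) / 2) <= exp (- (u * u) / 2))
      by (apply exp_monotone; nra).
    pose proof (exp_pos (- (u * u * (1 + t * t)) / 2)).
    apply Rmult_le_reg_r with (1 + t * t); [lra|].
    unfold Rdiv. rewrite Rmult_assoc, Rinv_l by lra. nra.
  - rewrite RInt_const. unfold scal; simpl; unfold mult; simpl. ring.
Qed.

Lemma gauss_int_nonneg b : 0 <= b -> 0 <= gauss_int b.
Proof.
  intros Hb. apply RInt_ge_0; [exact Hb | apply gauss_ex_RInt |].
  intros; left; apply gauss_pos.
Qed.

(* int_0^b g tends to sqrt(PI/2) from below as b -> +oo (the lower half suffices). *)
Lemma gauss_int_near_limit eps : 0 < eps ->
  exists M, forall b, 0 <= b -> b >= M -> sqrt (PI / 2) - eps <= gauss_int b.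
Proof.
  intros He. set (s := sqrt (PI / 2)).
  assert (Hs : 0 < s) by (apply sqrt_lt_R0; pose proof PI_RGT_0; lra).
  assert (Hs2 : s * s = PI / 2) by (apply sqrt_sqrt; pose proof PI_RGT_0; lra).
  destruct (gauss_vanishes (eps * s / 4)) as [M HM]; [nra|].
  exists M. intros b Hb HbM. specialize (HM b HbM).
  pose proof (gauss_int_feynman b). pose proof (feynman_le_gauss b).
  pose proof (gauss_int_nonneg b Hb).
  destruct (Rle_or_lt s eps); [lra|].
  destruct (Rle_or_lt (s - eps) (gauss_int b)) as [Hge|Hlt]; [exact Hge|].
  assert (gauss_int b * gauss_int b < (s - eps) * (s - eps)) by nra.
  simpl in *. nra.
Qed.

(* Boyd's function B(t) = PI g(t) / ((PI-1) t + sqrt(t^2+2PI)) and its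
   negated derivative [boyd_slope]. *)

Definition rad (t : R) : R := sqrt (t * t + 2 * PI).

Definition boyd_den (t : R) : R := (PI - 1) * t + rad t.

Definition boyd (t : R) : R := PI / boyd_den t * gauss t.

Definition boyd_slope (t : R) : R :=
  PI * gauss t * (t * boyd_den t + (PI - 1) + t / rad t) / boyd_den t ^ 2.

(* The sign of [boyd_slope t - gauss t] is that of [boyd_sign t]. *)
Definition boyd_sign (t : R) : R := (PI - 4) * (t + rad t) ^ 2 + 2 * PI * (PI - 2).

Lemma PI_gt_3 : 3 < PI.
Proof. pose proof PI2_3_2. lra. Qed.

Lemma rad_pos t : 0 < rad t.
Proof. unfold rad. apply sqrt_lt_R0. pose proof PI_RGT_0. nra. Qed.

Lemma rad_sq t : rad t * rad t = t * t + 2 * PI.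
Proof. unfold rad. apply sqrt_sqrt. pose proof PI_RGT_0. nra. Qed.

Lemma boyd_den_pos t : 0 <= t -> 0 < boyd_den t.
Proof. intros. unfold boyd_den. pose proof (rad_pos t). pose proof PI_gt_3. nra. Qed.

Lemma boyd_derive t : 0 <= t -> is_derive boyd t (- boyd_slope t).
Proof.
  intros Ht. pose proof (boyd_den_pos t Ht). pose proof (rad_pos t).
  unfold boyd, boyd_slope. unfold boyd_den, rad, gauss in *. auto_derive.
  - split; [pose proof PI_RGT_0; nra | split; [lra | exact I]].
  - unfold Rdiv. field. lra.
Qed.

Lemma boyd_slope_continuous t : 0 <= t -> continuous boyd_slope t.
Proof.
  intros Ht. pose proof (boyd_den_pos t Ht). pose proof (rad_pos t).
  apply (@ex_derive_continuous R_AbsRing R_NormedModule).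
  unfold boyd_slope. unfold boyd_den, rad, gauss in *. auto_derive.
  repeat split; try lra; pose proof PI_RGT_0; nra.
Qed.

Lemma boyd_slope_is_RInt a b : 0 <= a -> a <= b -> is_RInt boyd_slope a b (boyd a - boyd b).
Proof.
  intros Ha Hab.
  assert (HI : is_RInt (fun t => - boyd_slope t) a b (minus (boyd b) (boyd a))).
  { apply (@is_RInt_derive R_CompleteNormedModule).
    - intros t Ht. rewrite Rmin_left in Ht by lra. apply boyd_derive. lra.
    - intros t Ht. rewrite Rmin_left in Ht by lra.
      apply (@continuous_opp R_UniformSpace R_AbsRing R_NormedModule boyd_slope), boyd_slope_continuous. lra. }
  apply (@is_RInt_opp R_CompleteNormedModule) in HI.
  replace (boyd a - boyd b) with (opp (minus (boyd b) (boyd a)))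
    by (change (- (boyd b - boyd a) = boyd a - boyd b); ring).
  apply (is_RInt_ext _ _ _ _ _ (fun t _ => Ropp_involutive (boyd_slope t)) HI).
Qed.

(* Polynomial identity behind the sign of [boyd_slope - gauss], valid whenever
   s^2 = t^2 + 2p (here s = rad t and p = PI). *)
Lemma boyd_identity (t s p : R) : s * s = t * t + 2 * p ->
  (s + t) ^ 3 * (p * t * ((p - 1) * t + s) * s + p * ((p - 1) * s + t) - ((p - 1) * t + s) ^ 2 * s)
  = p ^ 2 * ((p - 4) * (t + s) ^ 2 + 2 * p * (p - 2)).
Proof.
  intros H.
  transitivity (p ^ 2 * ((p - 4) * (t + s) ^ 2 + 2 * p * (p - 2)) + (s * s - t * t - 2 * p) *
    (- s * s * s * s - s * s * s * t * p - s * s * s * t - 2 * s * s * t * t * p + s * s * t * t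
     + s * s * p * p - 3 * s * s * p - s * t * t * t * p + s * t * t * t + s * t * p * p
     - 4 * s * t * p - t * t * p + p * p * p - 2 * p * p)).
  - ring.
  - rewrite H. ring.
Qed.

Lemma boyd_slope_gap t : 0 <= t ->
  exists w, 0 < w /\ boyd_slope t - gauss t = w * boyd_sign t.
Proof.
  intros Ht. pose proof (boyd_den_pos t Ht). pose proof (rad_pos t).
  pose proof (gauss_pos t). pose proof PI_RGT_0.
  exists (gauss t * PI ^ 2 / (rad t * boyd_den t ^ 2 * (rad t + t) ^ 3)). split.
  - apply Rdiv_lt_0_compat; [apply Rmult_lt_0_compat; [lra | apply pow_lt; lra]|].
    apply Rmult_lt_0_compat; [apply Rmult_lt_0_compat; [lra | apply pow_lt; lra] | apply pow_lt; lra].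
  - set (D := rad t * boyd_den t ^ 2 * (rad t + t) ^ 3).
    replace (gauss t * PI ^ 2 / D * boyd_sign t) with (gauss t / D * (PI ^ 2 * boyd_sign t))
      by (unfold Rdiv; ring).
    unfold boyd_sign. rewrite <- (boyd_identity t (rad t) PI (rad_sq t)).
    unfold D, boyd_slope, boyd_den in *. field. repeat split; lra.
Qed.

(* [boyd_sign] is nonincreasing on [0, +oo), because PI < 4. *)
Lemma boyd_sign_antitone a t : 0 <= a <= t -> boyd_sign t <= boyd_sign a.
Proof.
  intros H. unfold boyd_sign.
  assert (rad a <= rad t) by (unfold rad; apply sqrt_le_1_alt; nra).
  pose proof (rad_pos a). pose proof PI_4.
  assert ((a + rad a) ^ 2 <= (t + rad t) ^ 2) by nra. nra.
Qed.

Lemma boyd_le_gauss_RInt a b : 0 <= a -> a <= b -> boyd_sign a <= 0 ->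
  boyd a - boyd b <= RInt gauss a b.
Proof.
  intros Ha Hab HM. rewrite <- (is_RInt_unique _ _ _ _ (boyd_slope_is_RInt a b Ha Hab)).
  apply RInt_le; [exact Hab | eexists; apply boyd_slope_is_RInt; lra | apply gauss_ex_RInt |].
  intros t Ht. destruct (boyd_slope_gap t) as [w [Hw Hgap]]; [lra|].
  pose proof (boyd_sign_antitone a t). nra.
Qed.

Lemma gauss_int_le_boyd x : 0 <= x -> 0 <= boyd_sign x -> gauss_int x <= boyd 0 - boyd x.
Proof.
  intros Hx HM. rewrite <- (is_RInt_unique _ _ _ _ (boyd_slope_is_RInt 0 x ltac:(lra) Hx)).
  apply RInt_le; [exact Hx | apply gauss_ex_RInt | eexists; apply boyd_slope_is_RInt; lra |].
  intros t Ht. destruct (boyd_slope_gap t) as [w [Hw Hgap]]; [lra|].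
  pose proof (boyd_sign_antitone t x). nra.
Qed.

Lemma boyd_le_twice_gauss b : 0 <= b -> boyd b <= 2 * gauss b.
Proof.
  intros Hb. unfold boyd. pose proof (boyd_den_pos b Hb). pose proof (gauss_pos b).
  assert (2 <= rad b) by (pose proof (rad_sq b); pose proof (rad_pos b); pose proof PI_gt_3; nra).
  assert (PI <= 2 * boyd_den b) by (unfold boyd_den; pose proof PI_4; pose proof PI_gt_3; nra).
  assert (PI / boyd_den b <= 2).
  { apply Rmult_le_reg_r with (boyd_den b); [lra|].
    unfold Rdiv. rewrite Rmult_assoc, Rinv_l by lra. lra. }
  nra.
Qed.

(* B(0) is the full Gaussian half-integral. *)
Lemma boyd_at_0 : boyd 0 = sqrt (PI / 2).
Proof.
  pose proof (rad_sq 0). pose proof (rad_pos 0). pose proof PI_RGT_0.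
  assert (E : boyd 0 = PI / rad 0).
  { unfold boyd, boyd_den, gauss. replace (- (0 * 0) / 2) with 0 by field.
    rewrite exp_0. replace ((PI - 1) * 0 + rad 0) with (rad 0) by ring. ring. }
  rewrite E, <- (sqrt_pow2 (PI / rad 0)) by (apply Rlt_le, Rdiv_lt_0_compat; lra).
  f_equal. field_simplify_eq; [|lra]. nra.
Qed.

Lemma tail_integral_ge x I c : tail_integral x I ->
  (forall eps, 0 < eps -> exists M, forall b, x <= b -> b >= M -> c - eps <= RInt gauss x b) ->
  c <= I.
Proof.
  intros [pr Hpr] Hc. destruct (Rle_or_lt c I) as [Hle|Hlt]; [exact Hle|]. exfalso.
  set (e := (c - I) / 2).
  destruct (Hpr e) as [M1 HM1]; [unfold e; lra|].
  destruct (Hc e) as [M2 HM2]; [unfold e; lra|].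
  set (b := Rmax x (Rmax M1 M2)).
  assert (Hxb : x <= b) by apply Rmax_l.
  assert (Hb1 : b >= M1) by (unfold b; pose proof (Rmax_r x (Rmax M1 M2)); pose proof (Rmax_l M1 M2); lra).
  assert (Hb2 : b >= M2) by (unfold b; pose proof (Rmax_r x (Rmax M1 M2)); pose proof (Rmax_r M1 M2); lra).
  specialize (HM1 b Hxb Hb1). specialize (HM2 b Hxb Hb2).
  rewrite <- RInt_Reals in HM1. apply Rabs_def2 in HM1. unfold e in *. lra.
Qed.

Lemma boyd_le_tail x I : 0 <= x -> tail_integral x I -> boyd x <= I.
Proof.
  intros Hx HI. apply (tail_integral_ge x I (boyd x) HI). intros eps He.
  destruct (Rle_or_lt (boyd_sign x) 0) as [Hneg|Hpos].
  - destruct (gauss_vanishes (eps / 2)) as [M HM]; [lra|].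
    exists M. intros b Hxb HbM.
    pose proof (boyd_le_gauss_RInt x b Hx Hxb Hneg). pose proof (boyd_le_twice_gauss b).
    specialize (HM b HbM). lra.
  - destruct (gauss_int_near_limit eps He) as [M HM]. exists M. intros b Hxb HbM.
    pose proof (gauss_int_le_boyd x Hx (Rlt_le _ _ Hpos)). specialize (HM b ltac:(lra) HbM).
    rewrite <- boyd_at_0 in HM.
    assert (Hsplit : plus (RInt gauss 0 x) (RInt gauss x b) = RInt gauss 0 b)
      by (apply (@RInt_Chasles R_CompleteNormedModule); apply gauss_ex_RInt).
    change (gauss_int x + RInt gauss x b = gauss_int b) in Hsplit. lra.
Qed.

Lemma Mills_ge_boyd x I : 0 <= x -> tail_integral x I -> PI / boyd_den x <= Mills x I.
Proof.
  intros Hx HI. pose proof (boyd_le_tail x I Hx HI) as HB.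
  assert (Hs : 0 < sqrt (2 * PI)) by (apply sqrt_lt_R0; pose proof PI_RGT_0; lra).
  assert (HM : Mills x I = I * exp (x * x / 2)) by (unfold Mills, Qval; field; lra).
  assert (HBe : boyd x * exp (x * x / 2) = PI / boyd_den x).
  { unfold boyd. rewrite Rmult_assoc, gauss_mul_exp. ring. }
  rewrite HM, <- HBe. apply Rmult_le_compat_r; [left; apply exp_pos | exact HB].
Qed.

Lemma boyd_threshold kappa x : kappa > 1 ->
  x >= sqrt 2 / sqrt ((kappa - 1) * (PI * (kappa - 1) + 2)) ->
  0 < x /\ boyd_den x <= kappa * x * PI.
Proof.
  intros Hk Hx. pose proof PI_gt_3.
  set (Q := (kappa - 1) * (PI * (kappa - 1) + 2)) in Hx.
  assert (HQ : 0 < Q) by (unfold Q; apply Rmult_lt_0_compat; nra).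
  pose proof (sqrt_lt_R0 Q HQ). pose proof (sqrt_sqrt Q (Rlt_le _ _ HQ)).
  assert (0 < sqrt 2) by (apply sqrt_lt_R0; lra). pose proof (sqrt_sqrt 2 ltac:(lra)).
  assert (HxQ : sqrt 2 <= x * sqrt Q).
  { apply Rge_le, (Rmult_le_compat_r (sqrt Q)) in Hx; [|lra].
    unfold Rdiv in Hx. rewrite Rmult_assoc, Rinv_l in Hx by lra. lra. }
  assert (Hx0 : 0 < x) by nra.
  assert (Hx2 : 2 <= x * x * Q) by nra.
  split; [exact Hx0|].
  (* With L = ((kappa-1) PI + 1) x we have L^2 = PI x^2 Q + x^2 >= rad x ^ 2. *)
  set (L := ((kappa - 1) * PI + 1) * x).
  assert (0 <= L) by (unfold L; apply Rmult_le_pos; nra).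
  pose proof (rad_sq x). pose proof (rad_pos x).
  assert (rad x * rad x <= L * L).
  { replace (L * L) with (PI * (x * x * Q) + x * x) by (unfold L, Q; ring). nra. }
  assert (rad x <= L) by nra.
  unfold boyd_den. unfold L in *. nra.
Qed.

Theorem lemma2 (kappa : R) (hk : kappa > 1) (x I : R)
  (hx : x >= sqrt 2 / sqrt ((kappa - 1) * (PI * (kappa - 1) + 2)))
  (hI : tail_integral x I) :
  kappa * x * Mills x I >= 1.
Proof.
  destruct (boyd_threshold kappa x hk hx) as [Hx0 Hden].
  pose proof (Mills_ge_boyd x I (Rlt_le _ _ Hx0) hI) as HMills.
  pose proof (boyd_den_pos x (Rlt_le _ _ Hx0)) as Hpos.
  assert (Hone : 1 <= kappa * x * (PI / boyd_den x)).
  { replace (kappa * x * (PI / boyd_den x)) with (kappa * x * PI / boyd_den x) by (field; lra).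
    apply Rmult_le_reg_r with (boyd_den x); [exact Hpos|].
    unfold Rdiv. rewrite Rmult_assoc, Rinv_l by lra. lra. }
  apply Rle_ge, Rle_trans with (1 := Hone), Rmult_le_compat_l; [nra | exact HMills].
Qed.
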